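(* It holds that $$\mathrm{cl}\,\mathrm{conv}(P^B\setminus C)=\mathrm{cl}\,\mathrm{conv}\big(P^B\setminus T^{P^B\cap C}\big),$$ where $T^{P^B\cap C}=\{\bar x\}+\mathrm{conv}\big(\bigcup_{j\in N_1\cup N_2}\{\lambda\bar r^j:\alpha_j<\lambda<\beta_j\}\big)+\mathrm{recc}(P^B\cap C)$.
   Context: Let $A\in\mathbb{R}^{m\times n}$ have full row rank, $b\in\mathbb{R}^m$, and $P=\{x\in\mathbb{R}^n_+:Ax=b\}$. Let $C\subseteq\mathbb{R}^n$ be an open convex set. Fix a basis $B$ of $P$ with nonbasic set $N=\{1,\dots,n\}\setminus B$. Write $P=\{x:x_i=\bar b_i-\sum_{j\in N}\bar a_{ij}x_j\ (i\in B),\ x\ge0\}$ with $\bar b\ge0$. The basic solution $\bar x$ has $\bar x_i=\bar b_i$ ($i\in B$) and $0$ ($i\in N$). $P^B$ is obtained by dropping $x_i\ge0$ for $i\in B$. For $j\in N$, $\bar r^j$ has $\bar r^j_k=-\bar a_{kj}$ ($k\in B$), $\bar r^j_j=1$, and $0$ otherwise. Thus $P^B=\{\bar x+\sum_{j\in N}x_j\bar r^j:x_j\ge0\}$. It is assumed that $\bar x\notin\mathrm{cl}(C)$. For $j\in N$, $\alpha_j=\inf\{\lambda\ge0:\bar x+\lambda\bar r^j\in C\}$ and $\beta_j=\sup\{\lambda\ge0:\bar x+\lambda\bar r^j\in C\}$, with $\alpha_j=+\infty$, $\beta_j=-\infty$ if the halfline misses $C$. These values are unchanged if $C$ is replaced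 by $P^B\cap C$. Define - $N_1=\{j:\alpha_j\in(0,\infty),\beta_j=+\infty\}$; - $N_2=\{j:\alpha_j\in(0,\infty),\beta_j\in(\alpha_j,\infty)\}$. For a set $K$, $\mathrm{recc}(K)=\{d:x+\lambda d\in K\ \forall x\in K,\lambda\ge0\}$. Here $\mathrm{cl}\,\mathrm{conv}$ is the closure of the convex hull. *)

From HB Require Import structures.
From mathcomp Require Import all_boot all_order all_algebra.
From mathcomp Require Import all_classical all_reals all_analysis.
Set Implicit Arguments. Unset Strict Implicit. Unset Printing Implicit Defensive.
Import Order.TTheory GRing.Theory Num.Theory.
Import numFieldNormedType.Exports.
Local Open Scope classical_set_scope.
Local Open Scope ring_scope.

Section Defs.
Variable R : realType.

Definition convexS (n : nat) (K : set 'cV[R]_n) : Prop :=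
  forall x y (t : R), K x -> K y -> 0 <= t -> t <= 1 -> K (t *: x + (1 - t) *: y).

Definition conv_hull (n : nat) (S : set 'cV[R]_n) : set 'cV[R]_n :=
  [set x | exists (k : nat) (w : 'I_k -> R) (p : 'I_k -> 'cV[R]_n),
     [/\ forall i, 0 <= w i, \sum_(i < k) w i = 1, forall i, S (p i)
       & x = \sum_(i < k) w i *: p i]].

Definition recc (n : nat) (K : set 'cV[R]_n) : set 'cV[R]_n :=
  [set d | forall x (lam : R), K x -> 0 <= lam -> K (x + lam *: d)].

(* A basis of P = {x >= 0 : A x = b} is given by an injective enumeration
   beta : 'I_m -> 'I_n of the basic variables (B = image of beta) such that
   the basis matrix A_B is invertible. *)
Variables (m n : nat) (A : 'M[R]_(m, n)) (b : 'cV[R]_m) (beta : 'I_m -> 'I_n).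

Definition isbasic (i : 'I_n) : bool := [exists k, beta k == i].
Definition nonbasic (i : 'I_n) : bool := ~~ isbasic i.

Definition AB : 'M[R]_m := colsub beta A.
Definition bbar : 'cV[R]_m := invmx AB *m b.
Definition abar : 'M[R]_(m, n) := invmx AB *m A.

Definition P : set 'cV[R]_n :=
  [set x | A *m x = b /\ forall i, 0 <= x i 0].

(* P^B : drop nonnegativity of the basic variables in the tableau description *)
Definition PB : set 'cV[R]_n :=
  [set x | (forall k : 'I_m,
              x (beta k) 0 = bbar k 0 - \sum_(j < n | nonbasic j) abar k j * x j 0)
         /\ (forall j, nonbasic j -> 0 <= x j 0)].

Definition xbar : 'cV[R]_n :=
  \col_i (match [pick k | beta k == i] with Some k => bbar k 0 | None => 0 end).

Definition rbar (j : 'I_n) : 'cV[R]_n :=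
  \col_i (match [pick k | beta k == i] with
          | Some k => - abar k j
          | None => if i == j then 1 else 0 end).

Variable C : set 'cV[R]_n.

Definition alpha (j : 'I_n) : \bar R :=
  ereal_inf [set (lam%:E) | lam in [set lam : R | 0 <= lam /\ C (xbar + lam *: rbar j)]].
Definition beta_ (j : 'I_n) : \bar R :=
  ereal_sup [set (lam%:E) | lam in [set lam : R | 0 <= lam /\ C (xbar + lam *: rbar j)]].

Definition N1 : set 'I_n :=
  [set j | nonbasic j /\ [/\ (0 < alpha j)%E, (alpha j < +oo)%E & beta_ j = +oo%E]].
Definition N2 : set 'I_n :=
  [set j | nonbasic j /\ [/\ (0 < alpha j)%E, (alpha j < +oo)%E,
                             (alpha j < beta_ j)%E & (beta_ j < +oo)%E]].

Definition TPC : set 'cV[R]_n :=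
  [set x | exists y z,
     [/\ conv_hull
            [set v | exists j, (N1 j \/ N2 j) /\
               exists lam : R, (alpha j < lam%:E < beta_ j)%E /\ v = lam *: rbar j] y,
          recc (PB `&` C) z
        & x = xbar + y + z]].

End Defs.

(* Inclusion from left to right holds because T lies in P^B ∩ C.  Conversely,
   if some x in P^B \ T lay outside the closed convex set
   K = cl conv (P^B \ C), a hyperplane c.y = gam would separate x from K, and
   every point of P^B below the hyperplane would lie in C.  Write
   x = xbar + sum_j x_j r^j.  Every ray r^j along which c decreases enters the
   halfspace, so it lies in N_1 with beta_j = +oo.  Moving the mass of these
   rays to the common level L = c.xbar - c.x gives a convex combination y of
   points of the open segments, and the remainder z = x - xbar - y has
   nonnegative ray coordinates and c.z = 0.  The ray from x along z stays in
   P^B below the hyperplane, hence in C; for an open convex set this makes z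
   a recession direction of C, hence of P^B ∩ C, and x = xbar + y + z lies
   in T. *)

From HB Require Import structures.
From mathcomp Require Import all_boot all_order all_algebra.
From mathcomp Require Import all_classical all_reals all_analysis.
From mathcomp.algebra_tactics Require Import ring lra.
Set Implicit Arguments. Unset Strict Implicit. Unset Printing Implicit Defensive.
Import Order.TTheory GRing.Theory Num.Theory.
Import numFieldNormedType.Exports.
Local Open Scope classical_set_scope.
Local Open Scope ring_scope.

Section ConvexSets.
Variables (R : realType) (n : nat).
Implicit Types (S K : set 'cV[R]_n) (x y : 'cV[R]_n).

Lemma conv_hull_self S : S `<=` conv_hull S.
Proof.
move=> x Sx; exists 1%N, (fun=> 1), (fun=> x).
by split=> //; rewrite big_ord1 ?scale1r.
Qed.

Lemma conv_hullS S1 S2 : S1 `<=` S2 -> conv_hull S1 `<=` conv_hull S2.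
Proof.
by move=> S12 _ [k [w [p [w0 w1 pS ->]]]]; exists k, w, p; split=> // i; apply: S12.
Qed.

Lemma convex_conv_hull S : convexS (conv_hull S).
Proof.
move=> _ _ t [k1 [w1 [p1 [w10 w11 p1S ->]]]] [k2 [w2 [p2 [w20 w21 p2S ->]]]] t0 t1.
pose w i := match fintype.split i with
  | inl a => t * w1 a | inr b => (1 - t) * w2 b end.
pose p i := match fintype.split i with inl a => p1 a | inr b => p2 b end.
have sl (a : 'I_k1) : fintype.split (lshift k2 a) = inl a by exact: (unsplitK (inl a)).
have sr (b : 'I_k2) : fintype.split (rshift k1 b) = inr b by exact: (unsplitK (inr b)).
exists (k1 + k2)%N, w, p; split.
- by move=> i; rewrite /w; case: (fintype.split i) => a; rewrite mulr_ge0 ?subr_ge0.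
- rewrite big_split_ord /= /w.
  under [X in X + _ = _]eq_bigr => a _ do rewrite sl.
  under [X in _ + X = _]eq_bigr => b _ do rewrite sr.
  by rewrite -!mulr_sumr w11 w21 !mulr1 addrC subrK.
- by move=> i; rewrite /p; case: (fintype.split i).
- rewrite big_split_ord /= /w /p.
  under [X in _ = X + _]eq_bigr => a _ do rewrite sl.
  under [X in _ = _ + X]eq_bigr => b _ do rewrite sr.
  by rewrite !scaler_sumr; congr (_ + _); apply: eq_bigr => i _; rewrite scalerA.
Qed.

Lemma convex_normalized_sum K k (w : 'I_k -> R) (p : 'I_k -> 'cV[R]_n) :
  convexS K -> (forall i, 0 <= w i) -> (forall i, K (p i)) -> 0 < \sum_i w i ->
  K ((\sum_i w i)^-1 *: \sum_i w i *: p i).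
Proof.
move=> cK; elim: k w p => [|k IH] w p w0 pK; first by rewrite big_ord0 ltxx.
rewrite !big_ord_recr /=.
set s := \sum_(i < k) _; set wl := w ord_max.
have s0 : 0 <= s by apply: sumr_ge0.
have wl0 : 0 <= wl by apply: w0.
have [s_eq0 | s_neq0] := eqVneq s 0.
  have /psumr_eq0P wi0 := s_eq0.
  rewrite big1 => [|i _]; last by rewrite wi0 ?scale0r.
  rewrite s_eq0 !add0r => wl_gt0.
  by rewrite scalerA mulVf ?scale1r ?gt_eqF.
have s_gt0 : 0 < s by rewrite lt_def s_neq0.
move=> swl_gt0.
have Kl := IH _ _ (fun i => w0 (widen_ord (leqnSn k) i))
  (fun i => pK (widen_ord (leqnSn k) i)) s_gt0.
have t0 : 0 <= s / (s + wl) by rewrite divr_ge0 ?ltW.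
have t1 : s / (s + wl) <= 1 by rewrite ler_pdivrMr // mul1r lerDl.
have := cK _ _ _ Kl (pK ord_max) t0 t1; congr K.
rewrite -/s scalerA scalerDr scalerA; congr (_ + _); congr (_ *: _); field.
  by rewrite s_neq0 gt_eqF.
by rewrite gt_eqF.
Qed.

Lemma conv_hull_min K S : convexS K -> S `<=` K -> conv_hull S `<=` K.
Proof.
move=> cK SK _ [k [w [p [w0 w1 pS ->]]]].
have := convex_normalized_sum cK w0 (fun i => SK _ (pS i)).
by rewrite w1 invr1 scale1r; apply; rewrite ltr01.
Qed.

Lemma conv_hull_translate S v y :
  conv_hull S y -> conv_hull [set v + s | s in S] (v + y).
Proof.
move=> [k [w [p [w0 w1 pS ->]]]]; exists k, w, (fun i => v + p i); split => //.
  by move=> i; exists (p i).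
under [X in _ = X]eq_bigr => i _ do rewrite scalerDr.
by rewrite big_split /= -scaler_suml w1 scale1r.
Qed.

Lemma convexI K1 K2 : convexS K1 -> convexS K2 -> convexS (K1 `&` K2).
Proof. by move=> c1 c2 x y t [] ? ? [] ? ? t0 t1; split; [exact: c1 | exact: c2]. Qed.

Lemma closure_normP K x :
  closure K x <-> forall e, 0 < e -> exists2 y, K y & `|x - y| < e.
Proof.
split=> [cx e e0 | H B /nbhs_ballP [e e0 eB]].
  have [y [Ky bxy]] := cx _ (nbhsx_ballx x e e0).
  by exists y => //; rewrite -ball_normE in bxy.
by have [y Ky hy] := H e e0; exists y; split => //; apply: eB; rewrite -ball_normE.
Qed.

Lemma convex_closure K : convexS K -> convexS (closure K).
Proof.
move=> cK x y t /closure_normP cx /closure_normP cy t0 t1.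
apply/closure_normP => e e0; have e2 : 0 < e / 2 by rewrite divr_gt0.
have [x' Kx' hx] := cx _ e2; have [y' Ky' hy] := cy _ e2.
exists (t *: x' + (1 - t) *: y'); first exact: cK.
have -> : t *: x + (1 - t) *: y - (t *: x' + (1 - t) *: y') =
    t *: (x - x') + (1 - t) *: (y - y') by rewrite !scalerBr opprD addrACA.
apply: le_lt_trans (ler_normD _ _) _; rewrite !normrZ !ger0_norm ?subr_ge0 //.
have := normr_ge0 (x - x'); have := normr_ge0 (y - y'); nra.
Qed.

(* Shrink a ball around [w] towards [x]: [w + lam z] is a convex combination
   of a point of that ball and a far point of the ray from [x]. *)
Lemma open_convex_ray_recc C x z : open C -> convexS C ->
  (forall t, 0 <= t -> C (x + t *: z)) -> recc C z.
Proof.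
move=> oC cC ray w lam Cw lam0.
have /nbhs_ballP[e /= e0 wC] : nbhs w C by rewrite openE in oC; exact: oC.
set D := `|w - x|.
have D0 : 0 <= D := normr_ge0 _.
have De : 0 < D + e by lra.
pose th := e / (2 * (D + e)).
have th0 : 0 < th by rewrite divr_gt0 // mulr_gt0.
have thDe : th * (D + e) = e / 2 by rewrite /th; field; rewrite gt_eqF.
have th_le : th <= 1 / 2.
  by rewrite -(ler_pM2r De) thDe; lra.
have th1 : 0 < 1 - th by lra.
pose w' := (1 - th)^-1 *: (w - th *: x).
have Cw' : C w'.
  apply: wC; rewrite -ball_normE /=.
  have -> : w - w' = (th / (1 - th)) *: (x - w).
    by apply/matrixP => i k; rewrite /w' !mxE; field; lra.
  rewrite normrZ ger0_norm; last by rewrite divr_ge0 // ltW.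
  by rewrite -normrN opprB -/D mulrAC ltr_pdivrMr //; nra.
have t0 : 0 <= 1 - th by lra.
have t1 : 1 - th <= 1 by lra.
have := cC _ _ _ Cw' (ray (lam / th) (divr_ge0 lam0 (ltW th0))) t0 t1.
congr C; apply/matrixP => i k; rewrite /w' !mxE; field; lra.
Qed.

End ConvexSets.

Section Separation.
Variables (R : realType) (n : nat).
Implicit Types (K : set 'cV[R]_n) (c x y z : 'cV[R]_n).

Definition dot c y : R := \sum_i c i 0 * y i 0.

Lemma dotD c y z : dot c (y + z) = dot c y + dot c z.
Proof. by rewrite /dot -big_split; apply: eq_bigr => i _; rewrite mxE mulrDr. Qed.

Lemma dotZ c a y : dot c (a *: y) = a * dot c y.
Proof. by rewrite /dot mulr_sumr; apply: eq_bigr => i _; rewrite mxE mulrCA. Qed.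

Lemma dotB c y z : dot c (y - z) = dot c y - dot c z.
Proof. by rewrite /dot -sumrB; apply: eq_bigr => i _; rewrite !mxE mulrBr. Qed.

Lemma dot_sum c (I : finType) (P : pred I) (F : I -> 'cV[R]_n) :
  dot c (\sum_(j | P j) F j) = \sum_(j | P j) dot c (F j).
Proof.
rewrite /dot; under eq_bigr => i _ do rewrite summxE mulr_sumr.
exact: exchange_big.
Qed.

Lemma dot_expand x y t :
  dot (x + t *: y) (x + t *: y) = dot x x + 2 * t * dot x y + t ^+ 2 * dot y y.
Proof.
rewrite /dot !mulr_sumr -!big_split /=.
by apply: eq_bigr => i _; rewrite !mxE; ring.
Qed.

Lemma sqr_coord_le_dot c i : c i 0 ^+ 2 <= dot c c.
Proof.
rewrite /dot (bigD1 i) //= -expr2 lerDl.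
by apply: sumr_ge0 => j _; rewrite -expr2 sqr_ge0.
Qed.

Lemma dot_self_ge0 c : 0 <= dot c c.
Proof. by apply: sumr_ge0 => i _; rewrite -expr2 sqr_ge0. Qed.

Lemma dot_self_gt0 c : c != 0 -> 0 < dot c c.
Proof.
apply: contraNT; rewrite -leNgt => c_le0; apply/eqP/matrixP => i j.
rewrite ord1 !mxE; apply/eqP; rewrite -sqrf_eq0 eq_le sqr_ge0 andbT.
exact: le_trans (sqr_coord_le_dot c i) c_le0.
Qed.

Lemma trmx_continuous m' n' : continuous (@trmx R m' n').
Proof.
move=> M B /= [U hU UB]; exists (fun i j => U j i).
  by move=> i j; have := hU j i; rewrite mxE.
by move=> N hN; apply: UB => i j; rewrite mxE; exact: hN.
Qed.

Lemma continuous_sqdist x : continuous (fun y => dot (y - x) (y - x)).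
Proof.
have coord_sub i : continuous (fun y : 'cV[R]_n => (y - x) i 0).
  rewrite (_ : (fun y => _) = (fun y => y i 0 - x i 0)); last first.
    by apply: funext => y; rewrite !mxE.
  by move=> y; apply: continuousB; [exact: coord_continuous | exact: cst_continuous].
apply: (continuous_big (op := +%R)) => [|i _ y]; first exact: add_continuous.
by apply: continuousM; exact: coord_sub.
Qed.

(* The sublevel set {k | |k - x| <= |k0 - x|} lies in a compact box; as
   [rV_compact] only covers row vectors, we minimize over transposes. *)
Lemma closed_nearest_point K x k0 : closed K -> K k0 ->
  exists2 p, K p & forall k, K k -> dot (p - x) (p - x) <= dot (k - x) (k - x).
Proof.
move=> clK Kk0; set d := dot (k0 - x) (k0 - x).
pose f (v : 'rV[R]_n) := dot (v^T - x) (v^T - x).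
pose B := trmx @^-1` K `&` f @^-1` [set r | r <= d].
have cf : continuous f.
  move=> v; apply: (@continuous_comp _ _ _ trmx (fun y => dot (y - x) (y - x))).
    exact: trmx_continuous.
  exact: continuous_sqdist.
have clB : closed B.
  by apply: closedI; apply: (continuous_closedP _).1 => //; exact: trmx_continuous.
pose I i := `[x i 0 - (1 + d), x i 0 + (1 + d)]%classic.
have box : compact [set v : 'rV[R]_n | forall i, I i (v ord0 i)].
  by apply: rV_compact => i; exact: segment_compact.
have cB : compact B.
  apply: subclosed_compact clB box _ => v [_ fv] i /=.
  have := le_trans (sqr_coord_le_dot (v^T - x) i) fv.
  rewrite !mxE /I /= in_itv /= => sq_le.
  have := sqr_ge0 (v ord0 i - x i 0 - 1); have := sqr_ge0 (v ord0 i - x i 0 + 1).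
  by move=> ? ?; apply/andP; split; nra.
have [|v /set_mem [Kv fv] vmin] := compact_EVT_min _ cB (continuous_subspaceT cf).
  by exists k0^T; split; rewrite /= ?/f trmxK.
exists v^T => // k Kk; have [kd | /ltW dk] := leP (dot (k - x) (k - x)) d.
  by have := vmin k^T; rewrite /f trmxK; apply; apply: mem_set; split; rewrite /= ?/f trmxK.
exact: le_trans fv dk.
Qed.

Lemma quadratic_ge0_linear_ge0 (u v : R) : 0 <= v ->
  (forall t, 0 < t -> t <= 1 -> 0 <= 2 * t * u + t ^+ 2 * v) -> 0 <= u.
Proof.
move=> v0 H; rewrite leNgt; apply/negP => u0.
have vu : 0 < v - u by lra.
set t := - u / (v - u).
have t0 : 0 < t by rewrite divr_gt0 // oppr_gt0.
have t1 : t <= 1 by rewrite ler_pdivrMr // mul1r; lra.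
have ht : t * (v - u) = - u by rewrite mulfVK // gt_eqF.
have := H _ t0 t1; nra.
Qed.

Lemma nearest_point_obtuse K x p : convexS K -> K p ->
  (forall k, K k -> dot (p - x) (p - x) <= dot (k - x) (k - x)) ->
  forall k, K k -> 0 <= dot (p - x) (k - p).
Proof.
move=> cK Kp pmin k Kk.
apply: (quadratic_ge0_linear_ge0 (dot_self_ge0 (k - p))) => t t0 t1.
have Kt : K (t *: k + (1 - t) *: p) by apply: cK => //; exact: ltW.
have := pmin _ Kt.
have -> : t *: k + (1 - t) *: p - x = (p - x) + t *: (k - p).
  by apply/matrixP => i j; rewrite !mxE; ring.
rewrite dot_expand; lra.
Qed.

Lemma separate_point_closed_convex K x : closed K -> convexS K -> ~ K x ->
  exists c gam, dot c x < gam /\ forall k, K k -> gam <= dot c k.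
Proof.
move=> clK cK nKx; have [[k0 Kk0] | K0] := pselect (K !=set0); last first.
  exists 0, 1; split=> [|k Kk]; last by exfalso; apply: K0; exists k.
  by rewrite /dot big1 ?ltr01 // => i _; rewrite mxE mul0r.
have [p Kp pmin] := closed_nearest_point x clK Kk0.
have px_neq0 : p - x != 0 by apply/eqP => /subr0_eq px; apply: nKx; rewrite -px.
exists (p - x), (dot (p - x) p); split.
  by rewrite -subr_gt0 -dotB dot_self_gt0.
by move=> k Kk; rewrite -subr_ge0 -dotB; exact: nearest_point_obtuse cK Kp pmin k Kk.
Qed.

End Separation.

Section Tableau.
Variables (R : realType) (m n : nat) (A : 'M[R]_(m, n)) (b : 'cV[R]_m).
Variable beta : 'I_m -> 'I_n.
Hypothesis beta_inj : injective beta.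

Local Notation x_B := (xbar A b beta).
Local Notation r_B := (rbar A beta).
Local Notation P_B := (PB A b beta).

Lemma pick_basic k : [pick k' | beta k' == beta k] = Some k.
Proof.
case: pickP => [k' /eqP/beta_inj -> // | /(_ k)].
by rewrite eqxx.
Qed.

Lemma pick_nonbasic i : nonbasic beta i -> [pick k | beta k == i] = None.
Proof.
move=> /existsPn Ni; case: pickP => // k Bk.
by have := Ni k; rewrite Bk.
Qed.

Lemma nonbasic_or_basic i : nonbasic beta i \/ exists k, i = beta k.
Proof.
rewrite /nonbasic /isbasic; case: existsP => [[k /eqP <-] | _]; last by left.
by right; exists k.
Qed.

Lemma xbar_basic k : x_B (beta k) 0 = bbar A b beta k 0.
Proof. by rewrite mxE pick_basic. Qed.

Lemma xbar_nonbasic i : nonbasic beta i -> x_B i 0 = 0.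
Proof. by move=> Ni; rewrite mxE pick_nonbasic. Qed.

Lemma rbar_basic j k : r_B j (beta k) 0 = - abar A beta k j.
Proof. by rewrite mxE pick_basic. Qed.

Lemma rbar_nonbasic j i : nonbasic beta i -> r_B j i 0 = if i == j then 1 else 0.
Proof. by move=> Ni; rewrite mxE pick_nonbasic. Qed.

Lemma cone_nonbasic (mu : 'I_n -> R) i : nonbasic beta i ->
  (\sum_(j | nonbasic beta j) mu j *: r_B j) i 0 = mu i.
Proof.
move=> Ni; rewrite summxE (bigD1 i) //= mxE rbar_nonbasic // eqxx mulr1.
rewrite big1 ?addr0 // => j /andP[_ ji].
by rewrite mxE rbar_nonbasic // eq_sym (negbTE ji) mulr0.
Qed.

Lemma cone_basic (mu : 'I_n -> R) k :
  (\sum_(j | nonbasic beta j) mu j *: r_B j) (beta k) 0 =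
  - \sum_(j | nonbasic beta j) abar A beta k j * mu j.
Proof.
rewrite summxE -sumrN; apply: eq_bigr => j _.
by rewrite mxE rbar_basic mulrN mulrC.
Qed.

Lemma PB_cone (mu : 'I_n -> R) : (forall j, nonbasic beta j -> 0 <= mu j) ->
  P_B (x_B + \sum_(j | nonbasic beta j) mu j *: r_B j).
Proof.
move=> mu0; split=> [k | j Nj]; rewrite [(_ + _ : 'cV_n) _ 0]mxE.
  rewrite xbar_basic cone_basic; congr (_ - _); apply: eq_bigr => j Nj.
  by rewrite [(_ + _ : 'cV_n) _ 0]mxE xbar_nonbasic // add0r cone_nonbasic.
by rewrite xbar_nonbasic // add0r cone_nonbasic // mu0.
Qed.

Lemma PB_decomp x : P_B x ->
  x = x_B + \sum_(j | nonbasic beta j) x j 0 *: r_B j.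
Proof.
move=> [xB _]; apply/matrixP => i j0; rewrite ord1 [(_ + _ : 'cV_n) _ 0]mxE.
have [Ni | [k ->]] := nonbasic_or_basic i.
  by rewrite xbar_nonbasic // add0r cone_nonbasic.
by rewrite xbar_basic cone_basic xB.
Qed.

Lemma PB_add_cone w (nu : 'I_n -> R) :
  P_B w -> (forall j, nonbasic beta j -> 0 <= nu j) ->
  P_B (w + \sum_(j | nonbasic beta j) nu j *: r_B j).
Proof.
move=> Pw nu0; rewrite {1}(PB_decomp Pw) -addrA -big_split /=.
under eq_bigr do rewrite -scalerDl.
by apply: PB_cone => j Nj; rewrite addr_ge0 ?nu0 ?Pw.2.
Qed.

Lemma PB_xbar : P_B x_B.
Proof.
have := @PB_cone (fun=> 0) (fun _ _ => lexx 0).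
by rewrite big1 ?addr0 // => j _; rewrite scale0r.
Qed.

Lemma PB_add_ray w j l : P_B w -> nonbasic beta j -> 0 <= l -> P_B (w + l *: r_B j).
Proof.
move=> Pw Nj l0; have := PB_add_cone (nu := fun i => if i == j then l else 0) Pw.
rewrite (bigD1 j) //= eqxx big1 ?addr0 => [|i /andP[_ /negbTE ->]]; last first.
  by rewrite scale0r.
by apply=> i _; case: eqP.
Qed.

Lemma convex_PB : convexS P_B.
Proof.
move=> x y t Px Py t0 t1.
have -> : t *: x + (1 - t) *: y = x_B +
    \sum_(j | nonbasic beta j) (t * x j 0 + (1 - t) * y j 0) *: r_B j.
  rewrite {1}(PB_decomp Px) {1}(PB_decomp Py) !scalerDr addrACA -scalerDl.
  rewrite [t + _]addrC subrK scale1r !scaler_sumr -big_split /=; congr (_ + _).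
  by apply: eq_bigr => j _; rewrite !scalerA -scalerDl.
apply: PB_cone => j Nj.
by rewrite addr_ge0 ?mulr_ge0 ?subr_ge0 ?Px.2 ?Py.2.
Qed.

Variable C : set 'cV[R]_n.

Local Notation alphaC := (alpha A b beta C).
Local Notation betaC := (beta_ A b beta C).

Definition ray_segments : set 'cV[R]_n :=
  [set v | exists j, (N1 A b beta C j \/ N2 A b beta C j) /\
     exists lam : R, (alphaC j < lam%:E < betaC j)%E /\ v = lam *: r_B j].

Lemma alpha_le j l : 0 <= l -> C (x_B + l *: r_B j) -> (alphaC j <= l%:E)%E.
Proof. by move=> l0 Cl; apply: ereal_inf_lbound; exists l. Qed.

Lemma alpha_gt0 j : ~ closure C x_B -> (0 < alphaC j)%E.
Proof.
move=> nCx.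
have [e e0 farC] : exists2 e, 0 < e & forall y, C y -> e <= `|x_B - y|.
  apply: contrapT => near; apply/nCx/closure_normP => e e0.
  apply: contrapT => noy; apply: near; exists e => // y Cy.
  by rewrite leNgt; apply/negP => ey; apply: noy; exists y.
have r0 := normr_ge0 (r_B j).
apply: (@lt_le_trans _ _ (e / (`|r_B j| + 1))%:E).
  by rewrite lte_fin divr_gt0 //; lra.
apply: le_ereal_inf_tmp => _ [l [l0 Cl] <-]; rewrite lee_fin ler_pdivrMr; last lra.
have := farC _ Cl; rewrite opprD addNKr normrN normrZ ger0_norm //; nra.
Qed.

Lemma lt_alpha_witness j lam : (alphaC j < lam%:E)%E ->
  exists l, [/\ 0 <= l, C (x_B + l *: r_B j) & l < lam].
Proof.
move=> alpha_lam; apply: contrapT => none; move: alpha_lam; apply/negP; rewrite -leNgt.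
apply: le_ereal_inf_tmp => _ [l [l0 Cl] <-]; rewrite lee_fin leNgt.
by apply/negP => l_lam; apply: none; exists l.
Qed.

Lemma gt_beta_witness j lam : (lam%:E < betaC j)%E ->
  exists l, [/\ 0 <= l, C (x_B + l *: r_B j) & lam < l].
Proof.
move=> lam_beta; apply: contrapT => none; move: lam_beta; apply/negP; rewrite -leNgt.
apply: ge_ereal_sup => _ [l [l0 Cl] <-]; rewrite lee_fin leNgt.
by apply/negP => lam_l; apply: none; exists l.
Qed.

Lemma between_alpha_beta_in_C j lam : convexS C ->
  (alphaC j < lam%:E < betaC j)%E -> C (x_B + lam *: r_B j).
Proof.
move=> cC /andP[/lt_alpha_witness[l1 [_ C1 l1_lam]] /gt_beta_witness[l2 [_ C2 lam_l2]]].
have t0 : 0 <= (l2 - lam) / (l2 - l1) by rewrite divr_ge0 //; lra.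
have t1 : (l2 - lam) / (l2 - l1) <= 1 by rewrite ler_pdivrMr ?mul1r; lra.
have := cC _ _ _ C1 C2 t0 t1; congr C.
by apply/matrixP => i k; rewrite !mxE; field; lra.
Qed.

Lemma beta_eq_pinfty j :
  (forall M, exists2 l, M <= l & C (x_B + l *: r_B j)) -> betaC j = +oo%E.
Proof.
move=> unbounded.
have ub M : (M%:E <= betaC j)%E.
  have [l Ml Cl] := unbounded (`|M| + 1).
  have M0 := normr_ge0 M; have MM := ler_norm M.
  apply: (@le_trans _ _ l%:E); first by rewrite lee_fin; lra.
  by apply: ereal_sup_ubound; exists l => //; split => //; lra.
case: (betaC j) ub => [r | // | ] ub.
  by have := ub (r + 1); rewrite lee_fin => ?; exfalso; lra.
by have := ub 0%R.
Qed.

Lemma TPC_sub_PB_C : convexS C -> TPC A b beta C `<=` P_B `&` C.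
Proof.
move=> cC _ [y [z [y_seg z_recc ->]]].
have cPC := convexI convex_PB cC.
suff PCy : (P_B `&` C) (x_B + y) by rewrite -(scale1r z); exact: z_recc.
apply: conv_hull_min cPC _ _ (conv_hull_translate x_B y_seg).
move=> _ [_ [j [[[Nj [a0 _ _]] | [Nj [a0 _ _ _]]] [lam [lam_in ->]]] <-]];
  have lam0 : 0 <= lam by case/andP: lam_in => /(lt_trans a0); rewrite lte_fin => /ltW.
all: by split; [exact: PB_add_ray PB_xbar Nj lam0 | exact: between_alpha_beta_in_C].
Qed.

End Tableau.

Section SeparatedPoint.
Variables (R : realType) (m n : nat) (A : 'M[R]_(m, n)) (b : 'cV[R]_m).
Variables (beta : 'I_m -> 'I_n) (C : set 'cV[R]_n).
Hypotheses (beta_inj : injective beta) (C_open : open C) (C_convex : convexS C).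

Local Notation x_B := (xbar A b beta).
Local Notation r_B := (rbar A beta).
Local Notation P_B := (PB A b beta).
Local Notation alphaC := (alpha A b beta C).
Local Notation betaC := (beta_ A b beta C).

Hypothesis xbar_notin : ~ closure C x_B.

Variables (c : 'cV[R]_n) (gam : R).
Hypothesis sep_C : forall y, P_B y -> dot c y < gam -> C y.
Hypothesis sep_xbar : gam <= dot c x_B.

(* [slope j] is the rate at which [c] decreases along the ray [r_B j], and
   [gap] the amount by which it must decrease before a ray enters [C]. *)
Local Notation slope j := (- dot c (r_B j)).
Local Notation gap := (dot c x_B - gam).
Local Notation descent j := (nonbasic beta j && (0 < slope j)).

Lemma ray_in_C j l : nonbasic beta j -> 0 <= l -> gap < l * slope j ->
  C (x_B + l *: r_B j).
Proof.
move=> Nj l0 past_gap; apply: sep_C.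
  exact: (PB_add_ray beta_inj (PB_xbar A b beta_inj) Nj l0).
by move: past_gap; rewrite dotD dotZ mulrN; lra.
Qed.

Lemma descent_N1 j : descent j -> N1 A b beta C j.
Proof.
case/andP=> Nj sj; have gap0 : 0 <= gap by rewrite subr_ge0.
pose l (M : R) := gap / slope j + M + 1.
have l_ge0 M : 0 <= M -> 0 <= l M by move=> M0; rewrite /l !addr_ge0 // divr_ge0 // ltW.
have C_l M : 0 <= M -> C (x_B + l M *: r_B j).
  move=> M0; apply: ray_in_C (l_ge0 _ M0) _ => //.
  have -> : l M * slope j = gap + (M + 1) * slope j.
    by rewrite /l; field; rewrite -oppr_eq0 gt_eqF.
  by rewrite ltrDl; nra.
split=> //; split; first exact: alpha_gt0.
  exact: le_lt_trans (alpha_le (l_ge0 _ (lexx 0)) (C_l _ (lexx 0))) (ltry _).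
apply: beta_eq_pinfty => M; exists (l `|M|); last exact/C_l/normr_ge0.
have := ler_norm M; have : 0 <= gap / slope j by rewrite divr_ge0 // ltW.
by rewrite /l; lra.
Qed.

Lemma level_between_alpha_beta j L : descent j -> gap < L ->
  (alphaC j < (L / slope j)%:E < betaC j)%E.
Proof.
move=> Jj gapL; have [_ [_ _ ->]] := descent_N1 Jj; rewrite ltry andbT.
case/andP: Jj => Nj sj; have gap0 : 0 <= gap by rewrite subr_ge0.
pose l := (gap + L) / (2 * slope j).
have l0 : 0 <= l by apply: divr_ge0; [lra | nra].
have l_slope : l * slope j = (gap + L) / 2.
  by rewrite /l; field; rewrite -oppr_eq0 gt_eqF.
apply: le_lt_trans (alpha_le l0 (ray_in_C Nj l0 _)) _; first by rewrite l_slope; lra.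
by rewrite lte_fin -(ltr_pM2r sj) l_slope divfK ?gt_eqF //; lra.
Qed.

Lemma conv_level_points (mu : 'I_n -> R) L :
  (forall j, nonbasic beta j -> 0 <= mu j) -> gap < L ->
  0 < \sum_(j | descent j) mu j * slope j ->
  conv_hull (ray_segments A b beta C)
    (\sum_(j | descent j) (mu j * L / \sum_(i | descent i) mu i * slope i) *: r_B j).
Proof.
move=> mu0 gapL; set s := \sum_(i | descent i) _ => s_gt0.
have [j0 Jj0] : exists j0, descent j0.
  apply: contrapT => noJ; move: s_gt0; rewrite /s big_pred0 ?ltxx // => j.
  by apply/negbTE/negP => Jj; apply: noJ; exists j.
have seg j : descent j -> ray_segments A b beta C ((L / slope j) *: r_B j).
  move=> Jj; exists j; split; first by left; exact: descent_N1.
  by exists (L / slope j); split => //; exact: level_between_alpha_beta.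
pose w j := if descent j then mu j * slope j / s else 0.
pose p j := if descent j then (L / slope j) *: r_B j else (L / slope j0) *: r_B j0.
exists n, w, p; split.
- move=> j; rewrite /w; case: ifP => // /andP[Nj sj].
  by rewrite divr_ge0 ?mulr_ge0 ?mu0 // ltW.
- by rewrite /w -big_mkcond /= -mulr_suml divff ?gt_eqF.
- by move=> j; rewrite /p; case: ifP => [/seg | _]; last exact: seg.
- rewrite big_mkcond /=; apply: eq_bigr => j _; rewrite /w /p.
  case Jj: (descent j); last by rewrite scale0r.
  case/andP: Jj => _ sj; rewrite scalerA; congr (_ *: _); field.
  by rewrite -oppr_eq0 !gt_eqF.
Qed.

Lemma recc_of_level_cone x (nu : 'I_n -> R) : P_B x -> dot c x < gam ->
  (forall j, nonbasic beta j -> 0 <= nu j) ->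
  dot c (\sum_(j | nonbasic beta j) nu j *: r_B j) = 0 ->
  recc (P_B `&` C) (\sum_(j | nonbasic beta j) nu j *: r_B j).
Proof.
set z := \sum_(j | _) _ => Px cx nu0 cz w l [Pw Cw] l0.
have P_z u t : P_B u -> 0 <= t -> P_B (u + t *: z).
  move=> Pu t0; rewrite /z scaler_sumr; under eq_bigr do rewrite scalerA.
  by apply: (PB_add_cone beta_inj) => // j Nj; rewrite mulr_ge0 ?nu0.
split; first exact: P_z.
apply: (open_convex_ray_recc C_open C_convex (x := x)) Cw l0 => t t0.
by apply: sep_C; [exact: P_z | rewrite dotD dotZ cz mulr0 addr0].
Qed.

Lemma mem_TPC_below_hyperplane x : P_B x -> dot c x < gam -> TPC A b beta C x.
Proof.
move=> Px cx; pose mu j := x j 0.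
have mu0 j : nonbasic beta j -> 0 <= mu j := Px.2 j.
pose L := dot c x_B - dot c x.
pose s := \sum_(j | descent j) mu j * slope j.
have L_le_s : L <= s.
  have -> : L = \sum_(j | nonbasic beta j) mu j * slope j.
    rewrite /L {1}(PB_decomp beta_inj Px) dotD opprD addNKr dot_sum -sumrN.
    by apply: eq_bigr => j _; rewrite dotZ mulrN.
  rewrite (bigID (fun j => 0 < slope j)) /= gerDl.
  by apply: sumr_le0 => j /andP[Nj]; rewrite -leNgt => /(mulr_ge0_le0 (mu0 j Nj)).
have gapL : gap < L by rewrite /L; lra.
have gap0 : 0 <= gap by rewrite subr_ge0.
have s_gt0 : 0 < s by apply: lt_le_trans L_le_s; lra.
pose nu j := if 0 < slope j then mu j * (1 - L / s) else mu j.
have nu0 j : nonbasic beta j -> 0 <= nu j.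
  move=> Nj; rewrite /nu; case: ifP => _; last exact: mu0.
  by rewrite mulr_ge0 ?mu0 // subr_ge0 ler_pdivrMr ?mul1r.
pose y := \sum_(j | descent j) (mu j * L / s) *: r_B j.
pose z := \sum_(j | nonbasic beta j) nu j *: r_B j.
have x_eq : x = x_B + y + z.
  rewrite {1}(PB_decomp beta_inj Px) -addrA /y /z big_mkcondr -big_split /=.
  congr (_ + _); apply: eq_bigr => j _; rewrite /nu.
  case: (boolP (0 < slope j)) => _.
    by rewrite -scalerDl /mu; congr (_ *: _); ring.
  by rewrite add0r.
have cy : dot c y = - L.
  rewrite /y dot_sum (eq_bigr (fun j => - (L / s) * (mu j * slope j))) => [|j _].
    by rewrite -mulr_sumr mulNr divfK ?gt_eqF.
  by rewrite dotZ; ring.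
have cz : dot c z = 0 by move: (congr1 (dot c) x_eq); rewrite !dotD cy /L; lra.
exists y, z; split => //; first exact: conv_level_points.
exact: recc_of_level_cone Px cx nu0 cz.
Qed.

End SeparatedPoint.

Lemma PB_setD_TPC_sub_closure (R : realType) m n (A : 'M[R]_(m, n)) b beta
    (C : set 'cV[R]_n) :
  injective beta -> open C -> convexS C -> ~ closure C (xbar A b beta) ->
  PB A b beta `\` TPC A b beta C `<=` closure (conv_hull (PB A b beta `\` C)).
Proof.
move=> beta_inj C_open C_convex xbar_notin x [Px nTx]; apply: contrapT => nKx.
have [c [gam [cx sepK]]] := separate_point_closed_convex (@closed_closure _ _)
  (convex_closure (@convex_conv_hull _ _ (PB A b beta `\` C))) nKx.
apply/nTx/(mem_TPC_below_hyperplane beta_inj C_open C_convex xbar_notin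
  (c := c) (gam := gam)) => //.
  move=> y Py cy; apply: contrapT => nCy.
  by have := sepK y (subset_closure (conv_hull_self (conj Py nCy))); rewrite leNgt cy.
apply/sepK/subset_closure/conv_hull_self; split; first exact: PB_xbar.
by move/subset_closure.
Qed.

Unset Implicit Arguments.

Theorem corollary1 (R : realType) (m n : nat) (A : 'M[R]_(m, n)) (b : 'cV[R]_m)
  (beta : 'I_m -> 'I_n) (C : set 'cV[R]_n) :
  \rank A = m ->
  injective beta ->
  AB A beta \in unitmx ->
  (forall k, 0 <= bbar A b beta k 0) ->
  @open 'cV[R]_n C -> convexS C ->
  ~ @closure 'cV[R]_n C (xbar A b beta) ->
  @closure 'cV[R]_n (conv_hull (PB A b beta `\` C)) =
  @closure 'cV[R]_n (conv_hull (PB A b beta `\` TPC A b beta C)).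
Proof.
(* P^B is given directly by its tableau. *)
move=> _ beta_inj _ _ C_open C_convex xbar_notin; apply/seteqP; split.
  apply/closureS/conv_hullS => x [Px nCx]; split=> //.
  by case/(TPC_sub_PB_C beta_inj C_convex).
have sub : conv_hull (PB A b beta `\` TPC A b beta C) `<=`
    closure (conv_hull (PB A b beta `\` C)).
  apply: conv_hull_min; last exact: PB_setD_TPC_sub_closure.
  exact/convex_closure/convex_conv_hull.
by move=> x /(closureS sub); rewrite -(closure_id _).1 //; exact: closed_closure.
Qed.
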